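(* Let $k\ge 1$ and let $r_1,\ldots,r_k$ be $k$ travel requests whose arrivals follow independent Poisson processes with rates $\alpha_1,\ldots,\alpha_k>0$, respectively. Let $\bar t>0$. Then the probability that all $k$ requests have an occurrence within a time interval of length at most $\bar t$, i.e. the probability that $\max\{E_1,\ldots,E_k\}-\min\{E_1,\ldots,E_k\}\le \bar t$ where $E_i\sim\mathrm{Exp}(\alpha_i)$ are the independent times until the first occurrence of request $r_i$, equals $$P_{\bar{t}}(\alpha_{1}, \ldots, \alpha_{k})=\sum_{i=1}^{k} \frac{\alpha_{i}}{\sum_{j=1}^{k} \alpha_{j}} \prod_{\substack{j=1\\ j\neq i}}^{k}\left(1-e^{-\alpha_{j} \bar{t}}\right).$$
   Context: The time until the first occurrence of a Poisson process with rate $\alpha$ is exponentially distributed with parameter $\alpha$. *)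

From HB Require Import structures.
From mathcomp Require Import all_boot all_order all_algebra.
From mathcomp Require Import all_classical all_reals all_analysis.
From mathcomp Require Export exponential_distribution.
Set Implicit Arguments. Unset Strict Implicit. Unset Printing Implicit Defensive.
Import Order.TTheory GRing.Theory Num.Theory.
Local Open Scope classical_set_scope.
Local Open Scope ring_scope.

Definition mutually_independent_RV {R : realType} {d : measure_display}
  {T : measurableType d} (P : probability T R) (k : nat)
  (X : 'I_k -> {RV P >-> R}) : Prop :=
  forall (J : {set 'I_k}) (A : 'I_k -> set R),
    (forall i, measurable (A i)) ->
    P (\bigcap_(i in [set i | i \in J]) (X i @^-1` A i)) =
    (\prod_(i in J) P (X i @^-1` A i))%E.
Arguments mutually_independent_RV {R d T} P {k} X.

From HB Require Import structures.
From mathcomp Require Import all_boot all_order all_algebra.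
From mathcomp Require Import all_classical all_reals all_analysis.
From mathcomp Require Import exponential_distribution measurable_realfun.
From mathcomp Require Import ring lra.
Import Order.TTheory GRing.Theory Num.Theory.
Import numFieldTopology.Exports.
Local Open Scope classical_set_scope.
Local Open Scope ring_scope.

(* Fix a mesh h > 0. The event that E_i lies in the cell [nh, nh + h) and
   every other E_j in a prescribed window after nh is a box; by independence
   its probability is a product, and by memorylessness translating it by nh
   multiplies that product by e^{-Snh}, where S is the sum of the rates.
   The union over n of these boxes therefore has probability
   (1 - e^{-alpha_i h}) / (1 - e^{-Sh}) times a product over j <> i.
   Choosing the windows appropriately, such unions (indexed by the variable
   that arrives first) squeeze the event {max - min <= t} from inside and,
   up to the null event that some E_j is negative, from outside. As h -> 0
   the ratio tends to alpha_i / S and both bounds converge to the claimed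
   sum. *)

Section expR_estimates.
Context {R : realType}.

Lemma onem_expRN_bounds (u : R) : u * expR (- u) <= 1 - expR (- u) <= u.
Proof.
have := expR_ge1Dx u; have := expR_ge1Dx (- u); have := expR_gt0 (- u).
have : expR u * expR (- u) = 1 by rewrite -expRD subrr expR0.
by move=> *; apply/andP; split; nra.
Qed.

Lemma expR_ratio_bounds (a b h : R) : 0 <= a -> 0 < b -> 0 < h ->
  a / b * expR (- a * h) <= (1 - expR (- a * h)) / (1 - expR (- b * h))
  <= a / b * expR (b * h).
Proof.
move=> a0 b0 h0.
have /andP[Nlo Nup] := onem_expRN_bounds (a * h).
have /andP[Dlo Dup] := onem_expRN_bounds (b * h).
rewrite -!mulNr in Nlo Nup Dlo Dup.
have D0 : 0 < 1 - expR (- b * h).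
  by rewrite subr_gt0 expR_lt1 mulNr oppr_lt0 mulr_gt0.
have ebh : expR (b * h) * expR (- b * h) = 1.
  by rewrite mulNr -expRD subrr expR0.
have c0 : 0 <= a / b by rewrite divr_ge0 // ltW.
apply/andP; split; [rewrite ler_pdivlMr // | rewrite ler_pdivrMr //].
- have : a / b * expR (- a * h) * (b * h) = a * h * expR (- a * h).
    by field; rewrite gt_eqF.
  have := ler_wpM2l (mulr_ge0 c0 (expR_ge0 (- a * h))) Dup; nra.
- have : a / b * expR (b * h) * (b * h * expR (- b * h)) = a * h.
    transitivity (a / b * (b * h) * (expR (b * h) * expR (- b * h))).
      by ring.
    by rewrite ebh mulr1; field; rewrite gt_eqF.
  have := ler_wpM2l (mulr_ge0 c0 (expR_ge0 (b * h))) Dlo; nra.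
Qed.

Lemma continuous_expRM (c : R) : continuous (fun x : R => expR (c * x)).
Proof.
move=> x; apply: continuous_comp; last exact: continuous_expR.
by apply: cvgMl_tmp; exact: cvg_id.
Qed.

Lemma cvg_expRM_right0 (c : R) : expR (c * h) @[h --> 0^'+] --> (1 : R).
Proof.
by have := cvg_at_right_filter (continuous_expRM c 0); rewrite mulr0 expR0.
Qed.

Lemma cvg_expR_ratio (a b : R) : 0 <= a -> 0 < b ->
  (1 - expR (- a * h)) / (1 - expR (- b * h)) @[h --> 0^'+] --> a / b.
Proof.
move=> a0 b0.
have cvg_bound c : a / b * expR (c * h) @[h --> 0^'+] --> a / b.
  by rewrite -[X in _ --> X]mulr1; apply: cvgMl_tmp; exact: cvg_expRM_right0.
apply: squeeze_cvgr (cvg_bound (- a)) (cvg_bound b).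
near=> h; apply: expR_ratio_bounds a0 b0 _.
by near: h; exact: nbhs_right_gt.
Unshelve. all: by end_near. Qed.

End expR_estimates.

Lemma eseries_geometric {R : realType} (c q : R) : 0 <= q < 1 ->
  (\sum_(n <oo) (c * q ^+ n)%:E = (c / (1 - q))%:E)%E.
Proof.
move=> /andP[q0 q1]; apply: cvg_lim => //; apply: cvg_EFin.
  by apply: nearW => n; rewrite sumEFin.
under eq_fun do rewrite sumEFin.
by apply: cvg_geometric_series; rewrite ger0_norm.
Qed.

Lemma grid_cell_uniq {R : numDomainType} (h x : R) (n m : nat) : 0 < h ->
  n%:R * h <= x < n%:R * h + h -> m%:R * h <= x < m%:R * h + h -> n = m.
Proof.
move=> h0 /andP[nx xn] /andP[mx xm].
have lt_succ (p q : nat) : p%:R * h <= x -> x < q%:R * h + h -> (p <= q)%N.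
  move=> px xq; rewrite -ltnS -(ltr_nat R) -natr1 -(ltr_pM2r h0) mulrDl mul1r.
  exact: le_lt_trans px xq.
by apply/eqP; rewrite eqn_leq !lt_succ.
Qed.

Section exponential_prob_itv.
Context {R : realType} (rate : R).

Lemma exponential_prob_itv_cc (a b : R) : 0 <= a -> a < b ->
  exponential_prob rate `[a, b] = (expR (- rate * a) - expR (- rate * b))%:E.
Proof.
move=> a0 ab; rewrite /exponential_prob.
rewrite (@continuous_FTC2 _ _ (fun x => - expR (- rate * x))) //.
- by rewrite -EFinB opprK addrC.
- apply: (@continuous_subspaceW R^o _ _ [set` `[0, +oo[%R]).
  + by move=> x /=; rewrite !in_itv/= => /andP[ax _]; rewrite (le_trans a0 ax).
  + exact: within_continuous_exponential_pdf.
- split.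
  + by move=> z _; exact: ex_derive.
  + by apply/cvg_at_right_filter; apply: cvgN; exact: continuous_expRM.
  + by apply/cvg_at_left_filter; apply: cvgN; exact: continuous_expRM.
- move=> z; rewrite in_itv/= => /andP[az _].
  by apply: derive1_exponential_pdf; rewrite in_itv/= andbT (le_lt_trans a0 az).
Qed.

Lemma exponential_prob_itv_co (a b : R) : 0 <= a -> a <= b ->
  exponential_prob rate `[a, b[ = (expR (- rate * a) - expR (- rate * b))%:E.
Proof.
move=> a0; rewrite le_eqVlt => /orP[/eqP<-|ab].
  rewrite subrr set_itv_ge ?bnd_simp ?ltxx //.
  by rewrite /exponential_prob integral_set0.
rewrite /exponential_prob integral_itv_bndo_bndc.
  exact: exponential_prob_itv_cc.
apply/measurable_EFinP; apply: measurable_funTS.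
exact: measurable_exponential_pdf.
Qed.

Lemma exponential_prob_itvNy0 : exponential_prob rate `]-oo, 0[ = 0%E.
Proof.
rewrite /exponential_prob integral0_eq // => x; rewrite /= in_itv /= => x0.
by rewrite lt0_exponential_pdf.
Qed.

End exponential_prob_itv.

Lemma bigsetU_ordP {T : Type} (n : nat) (F : 'I_n -> set T) (x : T) :
  (\big[setU/set0]_(i < n) F i) x <-> exists i, F i x.
Proof.
split; last by move=> [i Fix]; rewrite (bigD1 i) //=; left.
by elim/big_rec: _ => [//|i X _ IH [Fix|/IH//]]; exists i.
Qed.

Lemma le_measure_bigsetU_ord {d} {T : ringOfSetsType d} {R : realFieldType}
    (mu : {content set T -> \bar R}) (n : nat) (F : 'I_n -> set T) :
  (forall i, measurable (F i)) ->
  (mu (\big[setU/set0]_(i < n) F i) <= \sum_(i < n) mu (F i))%E.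
Proof.
elim: n F => [|n IH] F mF; first by rewrite !big_ord0 measure0.
rewrite !big_ord_recr /=; apply: le_trans (measureU2 _ _ _) _ => //.
- by apply: bigsetU_measurable => i _.
- by rewrite leeD2r // IH.
Qed.

Lemma le_measure_up_to_null {d} {T : ringOfSetsType d} {R : realFieldType}
    (mu : {measure set T -> \bar R}) {A B N : set T} :
  measurable A -> measurable B -> measurable N -> mu N = 0%E ->
  A `<=` B `|` N -> (mu A <= mu B)%E.
Proof.
move=> mA mB mN N0 AB; rewrite -(measureU0 mB mN N0).
by apply: le_measure AB; rewrite inE //; exact: measurableU.
Qed.

Lemma measurable_fun_big {d} {T : measurableType d} {R : realType} {I : Type}
    (op : R -> R -> R) (r : seq I) (x0 : T -> R) (f : I -> T -> R) :
  (forall g1 g2 : T -> R, measurable_fun setT g1 -> measurable_fun setT g2 ->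
     measurable_fun setT (fun w => op (g1 w) (g2 w))) ->
  measurable_fun setT x0 -> (forall i, measurable_fun setT (f i)) ->
  measurable_fun setT (fun w => \big[op/x0 w]_(i <- r) f i w).
Proof.
move=> mop mx0 mf; elim: r => [|i r IH].
  by under eq_fun do rewrite big_nil.
by under eq_fun do rewrite big_cons; exact: mop.
Qed.

Lemma exists_eq_bigmin_seed {d} {T : orderType d} {I : Type} (r : seq I)
    (P : pred I) (F : I -> T) (i0 : I) :
  exists j, \big[Order.min/F i0]_(i <- r | P i) F i = F j.
Proof.
elim/big_ind: _ => [|_ _ [i ->] [j ->]|i _]; [by exists i0| |by exists i].
by rewrite /Order.min; case: ifP; [exists i|exists j].
Qed.

Section independent_exponentials.
Context {R : realType} {d : measure_display} {T : measurableType d}.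
Context {P : probability T R} {k : nat} (E : 'I_k -> {RV P >-> R}).
Context {alpha : 'I_k -> R}.
Hypothesis alpha_gt0 : forall i, 0 < alpha i.
Hypothesis E_indep : mutually_independent_RV P E.
Hypothesis E_exponential : forall i (A : set R), measurable A ->
  distribution P (E i) A = exponential_prob (alpha i) A.

Let S := \sum_(j < k) alpha j.

Let S_gt0 (i : 'I_k) : 0 < S.
Proof.
by rewrite /S (bigD1 i) //= ltr_pwDl // sumr_ge0 // => j _; exact: ltW.
Qed.

Let prob_preimage j A : measurable A ->
  P (E j @^-1` A) = exponential_prob (alpha j) A.
Proof. exact: E_exponential. Qed.

Definition box (a b : 'I_k -> R) : set T := \bigcap_j E j @^-1` `[a j, b j[.

Lemma measurable_box a b : measurable (box a b).
Proof.
apply: fin_bigcap_measurable => // j _.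
by apply: measurable_funPTI; exact: measurable_itv.
Qed.

Lemma prob_box a b : (forall j, 0 <= a j <= b j) ->
  P (box a b) = (\prod_j (expR (- alpha j * a j) - expR (- alpha j * b j)))%:E.
Proof.
move=> ab; have -> : box a b =
    \bigcap_(j in [set j | j \in [set: 'I_k]%SET]) E j @^-1` `[a j, b j[.
  by congr bigcap; apply/seteqP; split => j //= _; rewrite inE.
rewrite E_indep; last by move=> j; exact: measurable_itv.
rewrite -prodEFin; apply: eq_big => [j|j _]; first by rewrite inE.
have /andP[a0 ab_j] := ab j.
by rewrite prob_preimage ?exponential_prob_itv_co.
Qed.

Lemma prod_expR_shift (x : R) (a b : 'I_k -> R) :
  \prod_j (expR (- alpha j * (x + a j)) - expR (- alpha j * (x + b j))) =
  expR (- S * x) * \prod_j (expR (- alpha j * a j) - expR (- alpha j * b j)).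
Proof.
have -> : - S * x = \sum_j - alpha j * x.
  by rewrite /S mulNr mulr_suml -sumrN; apply: eq_bigr => j _; rewrite mulNr.
rewrite expR_sum -big_split /=.
by apply: eq_bigr => j _; rewrite !mulrDr !expRD; ring.
Qed.

Definition shifted_boxes (h : R) (a b : 'I_k -> R) : set T :=
  \bigcup_n box (fun j => n%:R * h + a j) (fun j => n%:R * h + b j).

Lemma measurable_shifted_boxes h a b : measurable (shifted_boxes h a b).
Proof. by apply: bigcup_measurable => n _; exact: measurable_box. Qed.

Lemma prob_shifted_boxes h a b i : 0 < h -> a i = 0 -> b i = h ->
  (forall j, 0 <= a j <= b j) ->
  P (shifted_boxes h a b) =
  ((1 - expR (- alpha i * h)) / (1 - expR (- S * h)) *
   \prod_(j | j != i) (expR (- alpha j * a j) - expR (- alpha j * b j)))%:E.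
Proof.
(* Coordinate i pins down n, so the translated boxes are disjoint, and by
   memorylessness their probabilities form a geometric sequence. *)
move=> h0 ai bi ab; have S0 := S_gt0 i.
rewrite measure_semi_bigcup; last 3 first.
- by move=> n; exact: measurable_box.
- move=> n m _ _ [w [/(_ i I) /= + /(_ i I) /=]].
  rewrite !in_itv /= ai bi !addr0.
  exact: grid_cell_uniq h0.
- exact: measurable_shifted_boxes.
rewrite (eq_eseriesr (g := fun n =>
    ((\prod_j (expR (- alpha j * a j) - expR (- alpha j * b j))) *
     expR (- S * h) ^+ n)%:E)); last first.
  move=> n _ /=; rewrite prob_box; last first.
    move=> j; have /andP[a0 abj] := ab j.
    by rewrite lerD2l abj andbT addr_ge0 // mulr_ge0 // ltW.
  by rewrite prod_expR_shift mulrC mulrCA expRM_natl.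
rewrite eseries_geometric; last first.
  by rewrite expR_ge0 expR_lt1 mulNr oppr_lt0 mulr_gt0.
by rewrite (bigD1 i) //= ai bi mulr0 expR0 mulrAC.
Qed.

Variable i0 : 'I_k.

Definition spread (w : T) : R :=
  \big[Num.max/E i0 w]_i E i w - \big[Num.min/E i0 w]_i E i w.

Lemma measurable_spread_le t : measurable [set w | spread w <= t].
Proof.
have mspread : measurable_fun setT spread.
  apply: measurable_funB.
  - by apply: measurable_fun_big => // g1 g2; exact: measurable_maxr.
  - by apply: measurable_fun_big => // g1 g2; exact: measurable_minr.
rewrite -[X in measurable X]setTI.
have -> : [set w | spread w <= t] = spread @^-1` `]-oo, t].
  by apply/seteqP; split => w; rewrite /= in_itv.
exact: mspread (measurable_itv _).
Qed.

Lemma spread_le_of_window w x t :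
  (forall j, x <= E j w <= x + t) -> spread w <= t.
Proof.
move=> win.
have [lo hi] : (forall j, x <= E j w) /\ (forall j, E j w <= x + t).
  by split => j; have /andP[] := win j.
have : \big[Num.max/E i0 w]_i E i w <= x + t.
  by apply/bigmax_leP; split => [|j _]; exact: hi.
have : x <= \big[Num.min/E i0 w]_i E i w.
  by apply/bigmin_geP; split => [|j _]; exact: lo.
rewrite /spread; lra.
Qed.

Lemma window_of_spread_le w t :
  spread w <= t -> exists i, forall j, E i w <= E j w <= E i w + t.
Proof.
have [i imin] := exists_eq_bigmin_seed (index_enum 'I_k) xpredT (E ^~ w) i0.
rewrite /spread imin => le_t; exists i => j.
have := le_bigmax (E i0 w) (E ^~ w) j; rewrite -imin bigmin_le /=; lra.
Qed.

Lemma prob_spread_le_lbound h t : 0 < h -> h <= t ->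
  ((\sum_i (1 - expR (- alpha i * h)) / (1 - expR (- S * h)) *
     \prod_(j | j != i) (expR (- alpha j * h) - expR (- alpha j * t)))%:E
   <= P [set w | (spread w <= t)%R])%E.
Proof.
move=> h0 ht.
pose B i := shifted_boxes h (fun j => if j == i then 0 else h)
                            (fun j => if j == i then h else t).
have PB i : P (B i) = ((1 - expR (- alpha i * h)) / (1 - expR (- S * h)) *
    \prod_(j | j != i) (expR (- alpha j * h) - expR (- alpha j * t)))%:E.
  rewrite (@prob_shifted_boxes _ _ _ i) ?eqxx //; last first.
    by move=> j; case: ifP => _; apply/andP; split; lra.
  by congr (_ * _)%:E; apply: eq_bigr => j /negPf ->.
have BA : \big[setU/set0]_i B i `<=` [set w | spread w <= t].
  move=> w /bigsetU_ordP [i [n _ Bw]].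
  apply: (@spread_le_of_window _ (n%:R * h)) => j.
  by have := Bw j I; rewrite /= in_itv /=; case: ifP => _ /andP[]; lra.
(* In B i the variable E i arrives strictly before all the others. *)
have trivB : trivIset setT B.
  move=> i i' _ _ [w [[n _ Bn] [m _ Bm]]].
  have [//|ii'] := eqVneq i i'; exfalso.
  have := Bn i I; have := Bn i' I; have := Bm i I; have := Bm i' I.
  by rewrite /= !in_itv /= !eqxx (negPf ii') eq_sym (negPf ii'); lra.
rewrite -sumEFin; under eq_bigr do rewrite -PB.
rewrite -measure_bigsetU_ord // => [|i]; last exact: measurable_shifted_boxes.
apply: le_measure BA; rewrite inE; last exact: measurable_spread_le.
by apply: bigsetU_measurable => i _; exact: measurable_shifted_boxes.
Qed.

Lemma prob_spread_le_ubound h t : 0 < h -> 0 < t ->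
  (P [set w | (spread w <= t)%R] <=
   (\sum_i (1 - expR (- alpha i * h)) / (1 - expR (- S * h)) *
     \prod_(j | j != i) (1 - expR (- alpha j * (h + t))))%:E)%E.
Proof.
move=> h0 t0.
pose B i := shifted_boxes h (fun=> 0) (fun j => if j == i then h else h + t).
have PB i : P (B i) = ((1 - expR (- alpha i * h)) / (1 - expR (- S * h)) *
    \prod_(j | j != i) (1 - expR (- alpha j * (h + t))))%:E.
  rewrite (@prob_shifted_boxes _ _ _ i) ?eqxx //; last first.
    by move=> j; case: ifP => _; apply/andP; split; lra.
  by congr (_ * _)%:E; apply: eq_bigr => j /negPf ->; rewrite mulr0 expR0.
pose N := \big[setU/set0]_j (E j @^-1` `]-oo, 0[).
have mNj j : measurable (E j @^-1` `]-oo, 0[).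
  by apply: measurable_funPTI; exact: measurable_itv.
have mN : measurable N by apply: bigsetU_measurable => j _.
have PNj j : P (E j @^-1` `]-oo, 0[) = 0%E.
  by rewrite prob_preimage ?exponential_prob_itvNy0.
have PN : P N = 0%E.
  apply/eqP; rewrite eq_le measure_ge0 andbT.
  apply: le_trans (le_measure_bigsetU_ord _ _ _ mNj) _.
  by rewrite big1 // => j _; exact: PNj.
have mB : measurable (\big[setU/set0]_i B i).
  by apply: bigsetU_measurable => i _; exact: measurable_shifted_boxes.
have cover : [set w | spread w <= t] `<=` \big[setU/set0]_i B i `|` N.
  move=> w /window_of_spread_le [i win].
  have [Ei_lt0|Ei_ge0] := ltP (E i w) 0.
    by right; apply/bigsetU_ordP; exists i; rewrite /= in_itv.
  left; apply/bigsetU_ordP; exists i.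
  have /andP[lo hi] := truncn_itv (divr_ge0 Ei_ge0 (ltW h0)).
  rewrite ler_pdivlMr // in lo.
  rewrite ltr_pdivrMr // -natr1 mulrDl mul1r in hi.
  exists (Num.truncn (E i w / h)) => // j _; rewrite /= in_itv /= addr0.
  have /andP[ij ji] := win j.
  by case: ifP => [/eqP ->|_]; apply/andP; split; lra.
have mA := measurable_spread_le t.
apply: le_trans (le_measure_up_to_null P mA mB mN PN cover) _.
rewrite -sumEFin (eq_bigr (fun i => P (B i))) => [|i _]; last by rewrite PB.
by apply: le_measure_bigsetU_ord => i; exact: measurable_shifted_boxes.
Qed.

Lemma cvg_sum_ratio_prod (g : 'I_k -> R -> R) (c : 'I_k -> R) :
  (forall j, g j h @[h --> 0^'+] --> c j) ->
  \sum_i (1 - expR (- alpha i * h)) / (1 - expR (- S * h)) *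
     \prod_(j | j != i) g j h @[h --> 0^'+] -->
  \sum_i alpha i / S * \prod_(j | j != i) c j.
Proof.
move=> gc; apply: cvg_big => [|i _]; first exact: add_continuous.
apply: cvgM; first exact: cvg_expR_ratio (ltW (alpha_gt0 i)) (S_gt0 i).
by apply: cvg_big => [|j _]; [exact: mul_continuous | exact: gc].
Qed.

Lemma cvg_prob_spread_lbound t :
  \sum_i (1 - expR (- alpha i * h)) / (1 - expR (- S * h)) *
     \prod_(j | j != i) (expR (- alpha j * h) - expR (- alpha j * t))
  @[h --> 0^'+] -->
  \sum_i alpha i / S * \prod_(j | j != i) (1 - expR (- alpha j * t)).
Proof.
apply: cvg_sum_ratio_prod => j.
by apply: cvgB; [exact: cvg_expRM_right0 | exact: cvg_cst].
Qed.

Lemma cvg_prob_spread_ubound t :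
  \sum_i (1 - expR (- alpha i * h)) / (1 - expR (- S * h)) *
     \prod_(j | j != i) (1 - expR (- alpha j * (h + t)))
  @[h --> 0^'+] -->
  \sum_i alpha i / S * \prod_(j | j != i) (1 - expR (- alpha j * t)).
Proof.
apply: cvg_sum_ratio_prod => j; under eq_fun do rewrite mulrDr expRD.
apply: cvgB; first exact: cvg_cst.
by rewrite -[X in _ --> X]mul1r; apply: cvgMr_tmp; exact: cvg_expRM_right0.
Qed.

End independent_exponentials.

Theorem lemma1 (R : realType) (d : measure_display) (T : measurableType d)
  (P : probability T R) (k : nat) (hk : (0 < k)%N)
  (alpha : 'I_k -> R) (halpha : forall i, 0 < alpha i)
  (tbar : R) (htbar : 0 < tbar)
  (E : 'I_k -> {RV P >-> R})
  (hind : mutually_independent_RV P E)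
  (hexp : forall i (A : set R), measurable A ->
     distribution P (E i) A = exponential_prob (alpha i) A) :
  P [set w | \big[Num.max/E (Ordinal hk) w]_(i < k) E i w
             - \big[Num.min/E (Ordinal hk) w]_(i < k) E i w <= tbar] =
  (\sum_(i < k) (alpha i / \sum_(j < k) alpha j) *
     \prod_(j < k | j != i) (1 - expR (- alpha j * tbar)))%:E.
Proof.
pose i0 := Ordinal hk.
have mA := measurable_spread_le E i0 tbar.
have PA_fin : P [set w | spread E i0 w <= tbar] \is a fin_num.
  by rewrite ge0_fin_numE // (le_lt_trans (probability_le1 P mA)) ?ltey.
rewrite -(fineK PA_fin); congr EFin; apply/le_anti/andP; split.
- apply: cvgr_to_ge (cvg_prob_spread_ubound halpha tbar) _.
  near=> h; have h0 : 0 < h by near: h; exact: nbhs_right_gt.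
  by rewrite -lee_fin fineK // (prob_spread_le_ubound E halpha hind hexp).
- apply: cvgr_to_le (cvg_prob_spread_lbound halpha tbar) _.
  near=> h; have h0 : 0 < h by near: h; exact: nbhs_right_gt.
  have ht : h <= tbar by apply: ltW; near: h; exact: nbhs_right_lt.
  by rewrite -lee_fin fineK // (prob_spread_le_lbound E halpha hind hexp).
Unshelve. all: by end_near. Qed.
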